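(* Consider a $K$-armed bandit ($K\ge 2$) with reward vector $r\in[0,1]^K$ having distinct entries, optimal value $V^*=\max_a r(a)$, and let $\pi_t$ be generated by the discrete EG iteration $\pi_{t+1}(a)=\pi_t(a)e^{\eta f_t(a)}/Z_t$ with a sufficiently small constant learning rate $\eta>0$ (as required for this iteration to converge to the optimal one-hot policy). Then the sub-optimality $\delta_t:=V^*-V_t$, where $V_t:=\pi_t^\top r$, satisfies $\delta_t=O(1/t)$.
   Context: Policies are softmax policies $\pi_\theta(a)=e^{\theta(a)}/\sum_{a'}e^{\theta(a')}$. At iteration $t$, $U_t(a):=r(a)-\pi_t^\top r$, $f_t(a):=U_t(a)\mathbf{1}\{U_t(a)>0\}$, $Z_t:=\sum_{a'}\pi_t(a')e^{\eta f_t(a')}$. *)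

From HB Require Import structures.
From mathcomp Require Import all_boot all_order all_algebra.
From mathcomp Require Import all_classical all_reals all_analysis.
Set Implicit Arguments. Unset Strict Implicit. Unset Printing Implicit Defensive.
Import Order.TTheory GRing.Theory Num.Theory.
Local Open Scope ring_scope.

Section EG.
Variables (R : realType) (K : nat).

Definition softmax (theta : 'I_K -> R) : 'I_K -> R :=
  fun a => expR (theta a) / \sum_(a' < K) expR (theta a').

Definition value (r pi : 'I_K -> R) : R := \sum_(a < K) pi a * r a.

Definition adv (r pi : 'I_K -> R) (a : 'I_K) : R := r a - value r pi.

Definition fpos (r pi : 'I_K -> R) (a : 'I_K) : R :=
  if 0 < adv r pi a then adv r pi a else 0.

Definition Zn (eta : R) (r pi : 'I_K -> R) : R :=
  \sum_(a' < K) pi a' * expR (eta * fpos r pi a').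

Definition eg_step (eta : R) (r pi : 'I_K -> R) : 'I_K -> R :=
  fun a => pi a * expR (eta * fpos r pi a) / Zn eta r pi.

Fixpoint eg_iter (eta : R) (r pi0 : 'I_K -> R) (t : nat) : 'I_K -> R :=
  match t with
  | 0 => pi0
  | t'.+1 => eg_step eta r (eg_iter eta r pi0 t')
  end.

End EG.

From HB Require Import structures.
From mathcomp Require Import all_boot all_order all_algebra.
From mathcomp Require Import all_classical all_reals all_analysis.
From mathcomp Require Import ring lra.
Import Order.TTheory GRing.Theory Num.Theory.
Set Implicit Arguments.
Unset Strict Implicit.
Unset Printing Implicit Defensive.

Local Open Scope ring_scope.

(* Let q_t := 1 - pi_t(a* ) be the mass off the optimal arm, d_t := V* - V_t,
   and g in (0, 1] a lower bound for the reward gaps r(a* ) - r(a), so that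
   g q_t <= d_t <= q_t.  For eta <= g / 4 one EG step gives
   pi_{t+1}(a* ) >= pi_t(a* ) (1 + eta g q_t d_t / 4).  Hence pi_t(a* ) never
   decreases and q_{t+1} <= q_t - b q_t^2 with b := pi_0(a* ) eta g^2 / 4,
   a recursion forcing q_t <= 1 / (b (t + 1)); finally d_t <= q_t. *)

Lemma expR_le_quadratic (R : realType) (x : R) :
  0 <= x -> x <= 1 / 2 -> expR x <= 1 + x + 2 * x ^+ 2.
Proof.
move=> x_ge0 x_le.
have ex_gt0 := expR_gt0 x.
have decay : (1 - x) * expR x <= 1.
  have := expR_ge1Dx (- x); rewrite expRN -(ler_pM2r ex_gt0) mulVf ?gt_eqF //.
have : 1 <= (1 - x) * (1 + x + 2 * x ^+ 2) by nra.
nra.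
Qed.

Lemma quadratic_recursion_decay (R : realFieldType) (b : R) (u : nat -> R) :
  0 < b -> b <= 1 -> (forall t, 0 <= u t) -> u 0 <= 1 ->
  (forall t, u t.+1 <= u t - b * u t ^+ 2) ->
  forall t, u t <= b^-1 / t.+1%:R.
Proof.
move=> b_gt0 b_le1 u_ge0 u0_le1 u_rec.
have inv t : u t * (1 + b * t%:R) <= 1.
  elim: t => [|t IH]; first by rewrite mulr0 addr0 mulr1.
  set s := 1 + b * t%:R in IH.
  have s_ge1 : 1 <= s by rewrite /s lerDl mulr_ge0 ?ler0n ?ltW.
  have -> : 1 + b * t.+1%:R = s + b by rewrite /s -addn1 natrD; ring.
  have y_le := u_rec t; have x_ge0 := u_ge0 t; have y_ge0 := u_ge0 t.+1.
  set x := u t in IH x_ge0 y_le *; set y := u t.+1 in y_ge0 y_le *.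
  (* with w := x s <= 1:  (x - b x^2)(s + b) <= w + w b (1 - w) <= 1 *)
  have ys : y * (s + b) <= (x - b * x ^+ 2) * (s + b) by apply: ler_wpM2r; lra.
  have xb : x * b * (1 - x * s) <= x * s * b * (1 - x * s).
    by apply: ler_wpM2r; [lra | apply: ler_wpM2r; [lra | nra]].
  have : 0 <= (1 - x * s) * (1 - b * (x * s)) by apply: mulr_ge0; nra.
  have : 0 <= b ^+ 2 * x ^+ 2 by rewrite -exprMn sqr_ge0.
  nra.
move=> t; rewrite ler_pdivlMr ?ltr0n // -(ler_pM2r b_gt0) mulVf ?gt_eqF //.
have := inv t.
have : 0 <= u t * b * t%:R by rewrite !mulr_ge0 ?ler0n ?(ltW b_gt0).
have := u_ge0 t; rewrite -addn1 natrD; nra.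
Qed.

Section EGStep.
Variables (R : realType) (K : nat) (r : 'I_K -> R) (astar : 'I_K).
Hypotheses (r01 : forall a, 0 <= r a <= 1) (r_max : forall a, r a <= r astar).

Lemma fpos_ge0 (pi : 'I_K -> R) a : 0 <= fpos r pi a.
Proof. by rewrite /fpos; case: ifP => // /ltW. Qed.

Variable pi : 'I_K -> R.
Hypotheses (pi_ge0 : forall a, 0 <= pi a) (pi_sum1 : \sum_a pi a = 1).

Local Notation d := (r astar - value r pi).
Local Notation q := (1 - pi astar).
Local Notation f := (fpos r pi).
Local Notation F := (\sum_a pi a * fpos r pi a).

Lemma sum_pi_mulr (c : R) : \sum_a pi a * c = c.
Proof. by rewrite -mulr_suml pi_sum1 mul1r. Qed.

Lemma pi_le1 a : pi a <= 1.
Proof. by rewrite -pi_sum1 (bigD1 a) //= lerDl sumr_ge0. Qed.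

Lemma mass_off_astarE : q = \sum_(a | a != astar) pi a.
Proof. by rewrite -pi_sum1 (bigD1 astar) //= addrAC subrr add0r. Qed.

Lemma subopt_off_astarE : d = \sum_(a | a != astar) pi a * (r astar - r a).
Proof.
rewrite -{1}(sum_pi_mulr (r astar)) /value -sumrB (bigD1 astar) //= subrr add0r.
by apply: eq_bigr => a _; rewrite mulrBr.
Qed.

Lemma subopt_le_mass_off : d <= q.
Proof.
rewrite subopt_off_astarE mass_off_astarE; apply: ler_sum => a _.
have := r01 a; have := r01 astar; have := pi_ge0 a; nra.
Qed.

Lemma subopt_ge0 : 0 <= d.
Proof.
rewrite subopt_off_astarE; apply: sumr_ge0 => a _.
by rewrite mulr_ge0 // subr_ge0.
Qed.

Lemma fpos_le_subopt a : f a <= d.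
Proof.
rewrite /fpos /adv; case: ifP => _; last exact: subopt_ge0.
by rewrite lerD2r.
Qed.

Lemma fpos_astar : f astar = d.
Proof.
rewrite /fpos /adv; case: ltP => // d_le0.
by apply/eqP; rewrite eq_le subopt_ge0 d_le0.
Qed.

Lemma Zn_ge1 (eta : R) : 0 <= eta -> 1 <= Zn eta r pi.
Proof.
move=> eta_ge0; rewrite /Zn -[leLHS]pi_sum1; apply: ler_sum => a _.
rewrite ler_peMr // -expR0 ler_expR mulr_ge0 //; exact: fpos_ge0.
Qed.

Lemma eg_step_ge0 (eta : R) a : 0 <= eta -> 0 <= eg_step eta r pi a.
Proof.
move=> eta_ge0; rewrite /eg_step divr_ge0 ?mulr_ge0 ?expR_ge0 //.
have := Zn_ge1 eta_ge0; lra.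
Qed.

Lemma sum_eg_step (eta : R) : 0 <= eta -> \sum_a eg_step eta r pi a = 1.
Proof.
move=> eta_ge0; rewrite /eg_step -mulr_suml -/(Zn eta r pi) divff // gt_eqF //.
have := Zn_ge1 eta_ge0; lra.
Qed.

Lemma Zn_le (eta : R) : 0 <= eta -> eta <= 1 / 2 ->
  Zn eta r pi <= 1 + (eta + 2 * eta ^+ 2 * d) * F.
Proof.
move=> eta_ge0 eta_le.
have d_le1 : d <= 1 by have := subopt_le_mass_off; have := pi_ge0 astar; lra.
set c := eta + 2 * eta ^+ 2 * d.
rewrite -[in leRHS]pi_sum1 /Zn mulr_sumr -big_split /=; apply: ler_sum => a _.
have := fpos_ge0 pi a; have := fpos_le_subopt a; move: (f a) => x x_le x_ge0.
have ex : expR (eta * x) <= 1 + c * x.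
  have sq : (eta * x) ^+ 2 <= eta ^+ 2 * d * x.
    by rewrite exprMn -mulrA ler_wpM2l ?sqr_ge0 //; nra.
  have half : eta * x <= 1 / 2 by nra.
  by have := expR_le_quadratic (mulr_ge0 eta_ge0 x_ge0) half; rewrite /c; nra.
have := pi_ge0 a; nra.
Qed.

Lemma sum_fpos_ge0 : 0 <= F.
Proof. by apply: sumr_ge0 => a _; rewrite mulr_ge0 ?fpos_ge0. Qed.

Lemma sum_fpos_le_subopt : F <= d.
Proof.
rewrite -[leRHS]sum_pi_mulr; apply: ler_sum => a _.
by rewrite ler_wpM2l ?fpos_le_subopt.
Qed.

Section Gap.
Variable g : R.
Hypotheses (g_ge0 : 0 <= g) (g_le1 : g <= 1)
  (gap : forall a, a != astar -> g <= r astar - r a).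

Lemma gap_mass_le_subopt : g * q <= d.
Proof.
rewrite subopt_off_astarE mass_off_astarE mulr_sumr; apply: ler_sum => a a_neq.
by rewrite mulrC ler_wpM2l ?gap.
Qed.

Lemma gap_le_sub_fpos a : a != astar -> g * d <= d - f a.
Proof.
move=> a_neq; have d_ge0 := subopt_ge0; have d_le1 : d <= 1.
  by have := subopt_le_mass_off; have := pi_ge0 astar; lra.
rewrite /fpos /adv; case: ifP => _; last by rewrite subr0 ler_piMl.
have -> : d - (r a - value r pi) = r astar - r a by ring.
exact: le_trans (ler_piMr g_ge0 d_le1) (gap a_neq).
Qed.

Lemma gap_gain : g * q * d <= d - F.
Proof.
rewrite -[in leRHS](sum_pi_mulr d) -sumrB.
under eq_bigr do rewrite -mulrBr.
rewrite (bigD1 astar) //= fpos_astar subrr mulr0 add0r mass_off_astarE.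
rewrite mulr_sumr mulr_suml; apply: ler_sum => a a_neq.
by rewrite mulrAC mulrC ler_wpM2l ?gap_le_sub_fpos.
Qed.

Variable eta : R.
Hypotheses (eta_ge0 : 0 <= eta) (eta_le : eta <= g / 4).

(* The optimal arm gets the largest bonus f a* = d, so e^(eta d) >= 1 + eta d,
   while Z <= 1 + eta F + O(eta^2 q d); the gap d - F >= g q d pays for the
   second-order term as soon as eta <= g / 4. *)
Lemma eg_step_astar_ge :
  pi astar * (1 + eta * g * q * d / 4) <= eg_step eta r pi astar.
Proof.
(* lra and nra ignore section hypotheses *)
have g0 := g_ge0; have g1 := g_le1; have eta0 := eta_ge0; have eta_g := eta_le.
have Z_ge1 := Zn_ge1 eta0.
rewrite /eg_step fpos_astar ler_pdivlMr; last by lra.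
rewrite -[leLHS]mulrA; apply: ler_wpM2l; first exact: pi_ge0.
have Z_le : Zn eta r pi <= 1 + (eta + 2 * eta ^+ 2 * d) * F.
  by apply: Zn_le => //; lra.
have d0 := subopt_ge0; have dq := subopt_le_mass_off.
have F0 := sum_fpos_ge0; have Fd := sum_fpos_le_subopt; have gain := gap_gain.
have p0 := pi_ge0 astar.
have := expR_ge1Dx (eta * d).
set Z := Zn eta r pi in Z_ge1 Z_le *.
have q0 : 0 <= q by have := pi_le1 astar; lra.
have qd0 : 0 <= q * d by rewrite mulr_ge0.
have c0 : 0 <= eta * g * q * d / 4 by rewrite !mulr_ge0 ?invr_ge0 ?ler0n.
have Z_le2 : Z <= 2.
  have eta2 : eta ^+ 2 <= 1 / 16 by nra.
  have : eta ^+ 2 * d <= eta ^+ 2 by rewrite ler_piMr ?sqr_ge0 //; lra.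
  have F1 : F <= 1 by lra.
  have : (eta + 2 * eta ^+ 2 * d) * F <= eta + 2 * eta ^+ 2 * d.
    by rewrite ler_piMr // addr_ge0 // !mulr_ge0 ?sqr_ge0.
  lra.
have dF : 2 * eta ^+ 2 * d * F <= eta * g * q * d / 2.
  have dF_qd : d * F <= q * d by rewrite [leLHS]mulrC ler_wpM2r //; lra.
  have eta2 : 2 * eta ^+ 2 <= eta * g / 2 by nra.
  have : 2 * eta ^+ 2 * (d * F) <= 2 * eta ^+ 2 * (q * d).
    by rewrite ler_wpM2l ?mulr_ge0 ?sqr_ge0.
  have : 2 * eta ^+ 2 * (q * d) <= eta * g / 2 * (q * d) by rewrite ler_wpM2r.
  lra.
have cZ : eta * g * q * d / 4 * Z <= eta * g * q * d / 2 by nra.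
have gain_eta : eta * (g * q * d) <= eta * (d - F) by rewrite ler_wpM2l.
lra.
Qed.

Lemma astar_gain_ge_sq : pi astar * (eta * g ^+ 2 / 4) * q ^+ 2 <=
  pi astar * (eta * g * q * d / 4).
Proof.
have q0 : 0 <= q by have := pi_le1 astar; lra.
rewrite -mulrA ler_wpM2l //.
have -> : eta * g ^+ 2 / 4 * q ^+ 2 = eta * g * q * (g * q) / 4 by ring.
rewrite ler_wpM2r ?invr_ge0 ?ler0n // ler_wpM2l ?gap_mass_le_subopt //.
by rewrite !mulr_ge0.
Qed.

Lemma eg_step_astar_ge_self : pi astar <= eg_step eta r pi astar.
Proof.
apply: le_trans eg_step_astar_ge; rewrite ler_peMr //.
by rewrite lerDl !mulr_ge0 ?invr_ge0 ?ler0n ?subopt_ge0 // subr_ge0 pi_le1.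
Qed.

Lemma mass_off_eg_step_le :
  1 - eg_step eta r pi astar <= q - pi astar * (eta * g ^+ 2 / 4) * q ^+ 2.
Proof. by have := eg_step_astar_ge; have := astar_gain_ge_sq; lra. Qed.
End Gap.
End EGStep.

Section EGIteration.
Variables (R : realType) (K : nat) (r : 'I_K -> R) (astar : 'I_K).
Hypotheses (r01 : forall a, 0 <= r a <= 1) (r_max : forall a, r a <= r astar).
Variables (g eta : R).
Hypotheses (g_ge0 : 0 <= g) (g_le1 : g <= 1)
  (gap : forall a, a != astar -> g <= r astar - r a).
Hypotheses (eta_ge0 : 0 <= eta) (eta_le : eta <= g / 4).
Variable pi0 : 'I_K -> R.
Hypotheses (pi0_ge0 : forall a, 0 <= pi0 a) (pi0_sum1 : \sum_a pi0 a = 1).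

Local Notation pi := (eg_iter eta r pi0).

Lemma eg_iter_policy t : (forall a, 0 <= pi t a) /\ \sum_a pi t a = 1.
Proof.
elim: t => [|t [pi_ge0 pi_sum1]] //=.
by split=> [a|]; [exact: eg_step_ge0 | exact: sum_eg_step].
Qed.

Lemma eg_iter_astar_ge t : pi0 astar <= pi t astar.
Proof.
elim: t => [|t IH] //=; have [pi_ge0 pi_sum1] := eg_iter_policy t.
exact: le_trans IH
  (eg_step_astar_ge_self r01 r_max pi_ge0 pi_sum1 g_ge0 g_le1 gap eta_ge0 eta_le).
Qed.

Lemma mass_off_eg_iter_decay t :
  1 - pi t.+1 astar <=
  (1 - pi t astar) - pi0 astar * (eta * g ^+ 2 / 4) * (1 - pi t astar) ^+ 2.
Proof.
have [pi_ge0 pi_sum1] := eg_iter_policy t.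
apply: le_trans
  (mass_off_eg_step_le r01 r_max pi_ge0 pi_sum1 g_ge0 g_le1 gap eta_ge0 eta_le) _.
rewrite lerD2l lerN2 ler_wpM2r ?sqr_ge0 // ler_wpM2r ?eg_iter_astar_ge //.
by rewrite !mulr_ge0 ?invr_ge0 ?ler0n ?sqr_ge0.
Qed.
End EGIteration.

Lemma softmax_gt0 (R : realType) (K : nat) (theta : 'I_K -> R) a :
  0 < softmax theta a.
Proof.
rewrite /softmax divr_gt0 ?expR_gt0 // (bigD1 a) //= ltr_pwDl ?expR_gt0 //.
by rewrite sumr_ge0 // => i _; rewrite expR_ge0.
Qed.

Lemma sum_softmax (R : realType) (K : nat) (theta : 'I_K -> R) :
  (0 < K)%N -> \sum_a softmax theta a = 1.
Proof.
move=> K_gt0; rewrite /softmax -mulr_suml divff // gt_eqF //.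
rewrite (bigD1 (Ordinal K_gt0)) //= ltr_pwDl ?expR_gt0 //.
by rewrite sumr_ge0 // => i _; rewrite expR_ge0.
Qed.

Lemma exists_reward_gap (R : realType) (K : nat) (r : 'I_K -> R) (astar : 'I_K) :
  (forall a, 0 <= r a <= 1) -> injective r -> (forall a, r a <= r astar) ->
  exists g : R, [/\ 0 < g, g <= 1 & forall a, a != astar -> g <= r astar - r a].
Proof.
move=> r01 r_inj r_max.
have gap_in01 a : a != astar -> 0 < r astar - r a <= 1.
  move=> a_neq; rewrite subr_gt0 lt_neqAle r_max andbT.
  rewrite (inj_eq r_inj) a_neq /=.
  by have := r01 a; have := r01 astar; lra.
exists (\prod_(a | a != astar) (r astar - r a)); split.
- by apply: prodr_gt0 => a /gap_in01 /andP[].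
- by apply: prodr_ile1 => a /gap_in01 /andP[/ltW -> ->].
- move=> b b_neq; rewrite (bigD1 b) //= ler_piMr //.
    by case/andP: (gap_in01 b b_neq) => /ltW.
  by apply: prodr_ile1 => a /andP[/gap_in01 /andP[/ltW -> ->]].
Qed.

Theorem corollary1 (R : realType) (K : nat) (r : 'I_K -> R) :
  (2 <= K)%N ->
  (forall a, 0 <= r a <= 1) ->
  injective r ->
  forall astar : 'I_K, (forall a, r a <= r astar) ->
  exists eta0 : R, 0 < eta0 /\
    forall eta : R, 0 < eta -> eta <= eta0 ->
    forall theta0 : 'I_K -> R,
    exists C : R, forall t : nat,
      (* V^* = r(astar) = max_a r(a); delta_t <= C/(t+1) *)
      r astar - value r (eg_iter eta r (softmax theta0) t) <= C / t.+1%:R.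
Proof.
move=> K_ge2 r01 r_inj astar r_max.
have [g [g_gt0 g_le1 gap]] := exists_reward_gap r01 r_inj r_max.
exists (g / 4); split=> [|eta eta_gt0 eta_le theta0]; first by rewrite divr_gt0.
have g_ge0 := ltW g_gt0; have eta_ge0 := ltW eta_gt0.
have pi0_ge0 a := ltW (softmax_gt0 theta0 a).
have pi0_sum1 := sum_softmax theta0 (ltnW K_ge2).
set b := softmax theta0 astar * (eta * g ^+ 2 / 4).
exists b^-1 => t.
have g2_gt0 : 0 < g ^+ 2 by exact: exprn_gt0.
have b_gt0 : 0 < b by rewrite /b mulr_gt0 ?softmax_gt0 //; nra.
have b_le1 : b <= 1.
  rewrite /b mulr_ile1 ?(pi_le1 pi0_ge0 pi0_sum1) //; nra.
have policy := eg_iter_policy r eta_ge0 pi0_ge0 pi0_sum1.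
have [pi_ge0 pi_sum1] := policy t.
apply: le_trans (subopt_le_mass_off astar r01 pi_ge0 pi_sum1) _.
apply: (quadratic_recursion_decay (u := fun s => 1 - _ s astar) b_gt0 b_le1 _ _ _ t).
- move=> s; have [pis_ge0 pis_sum1] := policy s.
  by rewrite subr_ge0 (pi_le1 pis_ge0 pis_sum1).
- by rewrite /= lerBlDr lerDl.
- exact: mass_off_eg_iter_decay.
Qed.
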